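(* Let $n\ge2$, $A\in\mathbb{R}^{n\times m}$, $B\in\mathbb{R}^{m\times n}$, and let $C$ be a cycle of the DSR$^{[2]}$ graph $G^{[2]}_{A,B}$. (i) If $C$ is twisted, then $\pi(C)$ is an s-walk if and only if $C$ is an s-cycle. (ii) If $C$ is direct, $\pi(C)=\{W',W''\}$, and both $W'$ and $W''$ are s-walks, then $C$ is an s-cycle.
   Context: DSR graphs: for $A\in\mathbb{R}^{n\times m}$, $B\in\mathbb{R}^{m\times n}$, $G_{A,B}$ is the signed, labelled bipartite digraph with S-vertices $S_1,\dots,S_n$ and R-vertices $R_1,\dots,R_m$, an arc $R_j\to S_i$ of sign $\mathrm{sign}(A_{ij})$ iff $A_{ij}\ne0$, an arc $S_i\to R_j$ of sign $\mathrm{sign}(B_{ji})$ iff $B_{ji}\ne0$, with antiparallel arcs of equal sign merged into an undirected edge. An edge arising from $A_{ij}\ne0$ (R-to-S or undirected) has label $|A_{ij}|$; an edge with only S-to-R orientation has label $\infty$. Walks traverse edges consistently with orientation (empty walks allowed); a cycle is a nonempty closed walk with no repeated vertex except first$=$last. A closed walk $(e_1,\dots,e_{2r})$ ($r\ge0$) is an s-walk if all its labels are finite and $\prod_{i=1}^r l(e_{2i-1})=\prod_{i=1}^r l(e_{2i})$; an s-cycle is a cycle which is an s-walk. DSR$^{[2]}$ graph: $\overline{\mathbf L}^A\in\mathbb{R}^{\binom n2\times mn}$ has rows indexed by $(i,j)$, $i<j$, columns by $(k,l)$, $1\le k\le m$, $1\le l\le n$, entries $A_{jk}$ if $l=i$,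 $-A_{ik}$ if $l=j$, $0$ otherwise; $\underline{\mathbf L}^B\in\mathbb{R}^{mn\times\binom n2}$ has $(k,l),(i,j)$ entry $B_{kj}$ if $l=i$, $-B_{ki}$ if $l=j$, $0$ otherwise. $G^{[2]}_{A,B}:=G_{\overline{\mathbf L}^A,\underline{\mathbf L}^B}$, with S-vertices $ij=ji$ and R-vertices $k^l$; an edge $(ij,k^l)$ exists only if $l\in\{i,j\}$. The projection $\pi$ sends an edge $(ij,k^j)$ to the edge $(S_i,R_k)$ of $G_{A,B}$, which has the same direction and label. Direct/twisted and $\pi(C)$: let $C$ have S-vertex sequence $a_1b_1,\dots,a_{T+1}b_{T+1}=a_1b_1$, and write the segment from $a_rb_r$ to $a_{r+1}b_{r+1}$ as $(a_rb_r,k^l,a_{r+1}b_{r+1})$ with $l$ the common index; its projection is a length-2 walk from $S_x$ to $S_y$, where $x$ is the element of $\{a_r,b_r\}$ other than $l$ and $y$ that of $\{a_{r+1},b_{r+1}\}$ other than $l$. Starting from empty walks at $S_{a_1}$ and $S_{b_1}$, for $r=1,\dots,T$ append the projected segment to whichever current walk ends at $S_x$. If the final walks $W',W''$ are both closed, $C$ is direct and $\pi(C)=\{W',W''\}$; otherwise $C$ is twisted and $\pi(C)=W'\sqcup W''$ is the closed walk obtained by traversing $W'$ and $W''$ in succession. *)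

From HB Require Import structures.
From mathcomp Require Import all_boot all_order all_algebra.
Set Implicit Arguments. Unset Strict Implicit. Unset Printing Implicit Defensive.
Import Order.TTheory GRing.Theory Num.Theory.
Local Open Scope ring_scope.

(* Generic DSR graph G_{A,B} with S-vertices of type S and R-vertices of    *)
(* type Rv, given by A : S -> Rv -> R (A_{s r}) and B : Rv -> S -> R         *)
(* (B_{r s}).  Between S_s and R_r there are at most two edges:            *)
(*  - the "A-edge" (exists iff A s r != 0): it is undirected when B r s has  *)
(*    the same (nonzero) sign as A s r ("merged"), otherwise it is the arc   *)
(*    R_r -> S_s; its label is |A s r|;                                      *)
(*  - the "B-edge" (exists iff B r s != 0 and the arcs were not merged): the *)
(*    arc S_s -> R_r, with label infinity.                                   *)
(* A walk is a sequence of traversal steps; a step records the S-vertex and *)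
(* R-vertex of the edge, which edge (st_A = true: the A-edge), and the       *)
(* direction of traversal (st_SR = true: from S_s to R_r).                   *)

Record step (S Rv : Type) := Step { st_s : S; st_r : Rv; st_A : bool; st_SR : bool }.

Section DSR.
Variables (R : realFieldType) (S Rv : eqType).
Variables (A : S -> Rv -> R) (B : Rv -> S -> R).

Definition merged (s : S) (r : Rv) : bool :=
  (A s r != 0) && (Num.sg (A s r) == Num.sg (B r s)).

Definition step_ok (st : step S Rv) : bool :=
  if st_A st then (A (st_s st) (st_r st) != 0) && (st_SR st ==> merged (st_s st) (st_r st))
  else [&& B (st_r st) (st_s st) != 0, ~~ merged (st_s st) (st_r st) & st_SR st].

Definition vstart (st : step S Rv) : S + Rv :=
  if st_SR st then inl (st_s st) else inr (st_r st).
Definition vend (st : step S Rv) : S + Rv :=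
  if st_SR st then inr (st_r st) else inl (st_s st).

Fixpoint chained (w : seq (step S Rv)) : bool :=
  match w with
  | a :: ((b :: _) as t) => (vend a == vstart b) && chained t
  | _ => true
  end.

Definition is_walk (w : seq (step S Rv)) : bool := all step_ok w && chained w.

Definition closed_walk (w : seq (step S Rv)) : bool :=
  is_walk w && (if w is a :: t then vend (last a t) == vstart a else true).

Definition is_cycle (w : seq (step S Rv)) : bool :=
  [&& closed_walk w, (0 < size w)%N & uniq (map vstart w)].

(* label of an A-edge (finite labels); B-edges have label infinity *)
Definition lbl (st : step S Rv) : R := `|A (st_s st) (st_r st)|.

Fixpoint alt_prods (w : seq (step S Rv)) : R * R :=
  match w with
  | a :: b :: t => ((lbl a * (alt_prods t).1), (lbl b * (alt_prods t).2))
  | [:: a] => (lbl a, 1)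
  | [::] => (1, 1)
  end.

Definition s_walk (w : seq (step S Rv)) : bool :=
  [&& closed_walk w, all (fun st => st_A st) w & (alt_prods w).1 == (alt_prods w).2].

Definition s_cycle (w : seq (step S Rv)) : bool := is_cycle w && s_walk w.

End DSR.

(* The DSR^[2] graph.  S-vertices: unordered pairs ij = ji, represented as  *)
(* (i, j) with i < j.  R-vertices: k^l represented as (k, l).              *)

Definition pair2 (n : nat) := {p : 'I_n * 'I_n | (p.1 < p.2)%N}.

Definition LbarA (R : realFieldType) (n m : nat) (A : 'M[R]_(n, m))
  (p : pair2 n) (kl : 'I_m * 'I_n) : R :=
  let i := (val p).1 in let j := (val p).2 in let k := kl.1 in let l := kl.2 in
  if l == i then A j k else if l == j then - A i k else 0.

Definition LunderB (R : realFieldType) (n m : nat) (B : 'M[R]_(m, n))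
  (kl : 'I_m * 'I_n) (p : pair2 n) : R :=
  let i := (val p).1 in let j := (val p).2 in let k := kl.1 in let l := kl.2 in
  if l == i then B k j else if l == j then - B k i else 0.

Definition matA (R : realFieldType) (n m : nat) (A : 'M[R]_(n, m)) : 'I_n -> 'I_m -> R :=
  fun i k => A i k.
Definition matB (R : realFieldType) (n m : nat) (B : 'M[R]_(m, n)) : 'I_m -> 'I_n -> R :=
  fun k i => B k i.

Definition G2step (n m : nat) := step (pair2 n) ('I_m * 'I_n).
Definition G1step (n m : nat) := step 'I_n 'I_m.

Definition other (n : nat) (p : pair2 n) (l : 'I_n) : 'I_n :=
  if l == (val p).1 then (val p).2 else (val p).1.

(* projection pi of a traversal of the edge (ij, k^l) onto (S_x, R_k), x the *)
(* element of {i,j} other than l: same edge kind (hence label) and direction. *)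
Definition proj_step (n m : nat) (st : G2step n m) : G1step n m :=
  Step (other (st_s st) (st_r st).2) (st_r st).1 (st_A st) (st_SR st).

(* Processes the segments (a_r b_r, k^l, a_{r+1} b_{r+1}) of a cycle given  *)
(* as a step sequence starting at an S-vertex; e1, e2 are the current       *)
(* endpoints of the walks w1 (started at S_{a_1}) and w2 (started at S_{b_1}). *)
Fixpoint proj_aux (n m : nat) (c : seq (G2step n m)) (e1 e2 : 'I_n)
  (w1 w2 : seq (G1step n m)) : 'I_n * 'I_n * seq (G1step n m) * seq (G1step n m) :=
  match c with
  | s1 :: s2 :: rest =>
      let x := other (st_s s1) (st_r s1).2 in
      let y := other (st_s s2) (st_r s2).2 in
      if e1 == x then proj_aux rest y e2 (w1 ++ [:: proj_step s1; proj_step s2]) w2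
      else proj_aux rest e1 y w1 (w2 ++ [:: proj_step s1; proj_step s2])
  | _ => (e1, e2, w1, w2)
  end.

Definition startS (n m : nat) (c : seq (G2step n m)) : seq (G2step n m) :=
  if c is st :: _ then (if st_SR st then c else rot 1 c) else c.

(* pi_data C = Some (direct?, W', W'') *)
Definition pi_data (n m : nat) (C : seq (G2step n m))
  : option (bool * seq (G1step n m) * seq (G1step n m)) :=
  let c := startS C in
  match c with
  | [::] => None
  | st :: _ =>
      let a1 := (val (st_s st)).1 in let b1 := (val (st_s st)).2 in
      let '(e1, e2, w1, w2) := proj_aux c a1 b1 [::] [::] in
      Some ((e1 == a1) && (e2 == b1), w1, w2)
  end.

From HB Require Import structures.
From mathcomp Require Import all_boot all_order all_algebra.
From mathcomp Require Import ring.
Set Implicit Arguments. Unset Strict Implicit. Unset Printing Implicit Defensive.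
Import Order.TTheory GRing.Theory Num.Theory.
Local Open Scope ring_scope.

(* Every edge (ij, k^l) of G^[2] has l in {i, j} and projects to an edge of
   G_{A,B} of the same kind, direction and label.  A cycle C of G^[2] is cut
   into segments of two steps, and [proj_aux] deals the projected segments to
   W' and W''; appending a segment to a walk of even length multiplies its
   odd-position product by the label of the first step and its even-position
   product by that of the second.  Hence the two alternating products of C are
   the products of the corresponding ones of W' and W'', so the s-condition of
   C is that of W' W'' (and is implied by those of W' and W'' separately).
   The endpoints of W' and W'' always form the current S-vertex of C, so in
   the twisted case W' ends where W'' starts and conversely, and W' W'' is a
   closed walk. *)

Definition mul2 {R : pzSemiRingType} (x y : R * R) : R * R := (x.1 * y.1, x.2 * y.2).

Lemma seq_ind2 (T : Type) (P : seq T -> Prop) :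
  P [::] -> (forall a, P [:: a]) -> (forall a b t, P t -> P [:: a, b & t]) ->
  forall s, P s.
Proof.
move=> P0 P1 P2 s; suff: P s /\ forall a, P (a :: s) by case.
by elim: s => [|b s [IHs IHbs]]; split=> // a; apply: P2.
Qed.

Section DSRWalks.
Variables (R : realFieldType) (S Rv : eqType).
Variables (A : S -> Rv -> R) (B : Rv -> S -> R).
Implicit Types (a : step S Rv) (t u v w : seq (step S Rv)) (x y z : S + Rv).

Local Notation all_A w := (all (fun e => st_A e) w).

Definition walk_between w x y : bool :=
  is_walk A B w &&
  (if w is a :: t then (vstart a == x) && (vend (last a t) == y) else x == y).

Definition balanced w : bool := (alt_prods A w).1 == (alt_prods A w).2.

Definition is_S x : bool := if x is inl _ then true else false.

Lemma is_S_vstart a : is_S (vstart a) = st_SR a.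
Proof. by rewrite /vstart; case: ifP. Qed.

Lemma is_S_vend a : is_S (vend a) = ~~ st_SR a.
Proof. by rewrite /vend; case: ifP. Qed.

Lemma walk_between_nil x y : walk_between [::] x y = (x == y).
Proof. by []. Qed.

Lemma walk_between_cons a t x y :
  walk_between (a :: t) x y =
  [&& step_ok A B a, vstart a == x & walk_between t (vend a) y].
Proof.
rewrite /walk_between /is_walk; case: t => [|b t] /=; first by rewrite !andbT.
rewrite [vstart b == _]eq_sym.
by case: (step_ok A B a); case: (vstart a == x); case: (vend a == vstart b);
  rewrite /= ?andbF.
Qed.

Lemma walk_between_cat {u v x y z} :
  walk_between u x y -> walk_between v y z -> walk_between (u ++ v) x z.
Proof.
elim: u x => [|a u IH] x; first by rewrite walk_between_nil => /eqP ->.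
by rewrite cat_cons !walk_between_cons => /and3P[-> -> /IH] /[apply].
Qed.

Lemma walk_between_split u v x z : walk_between (u ++ v) x z ->
  exists2 y, walk_between u x y & walk_between v y z.
Proof.
elim: u x => [|a u IH] x; first by exists x; rewrite ?walk_between_nil.
rewrite cat_cons !walk_between_cons => /and3P[ok sa /IH[y wu wv]].
by exists y => //; rewrite walk_between_cons ok sa.
Qed.

Lemma walk_between_odd w x y :
  walk_between w x y -> odd (size w) = (is_S x != is_S y).
Proof.
elim: w x => [|a w IH] x; first by rewrite walk_between_nil => /eqP ->; rewrite eqxx.
rewrite walk_between_cons => /and3P[_ /eqP <- /IH] /= ->.
by rewrite is_S_vstart is_S_vend; case: (st_SR a); case: (is_S y).
Qed.

Lemma closed_walk_between a t :
  closed_walk A B (a :: t) = walk_between (a :: t) (vstart a) (vstart a).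
Proof. by rewrite /closed_walk /walk_between eqxx. Qed.

Lemma walk_between_closed {w x} : walk_between w x x -> closed_walk A B w.
Proof.
case: w => [|a t] // wx; rewrite closed_walk_between.
by case/andP: (wx) => _ /andP[/eqP -> _].
Qed.

Lemma closed_walk_even w : closed_walk A B w -> ~~ odd (size w).
Proof.
by case: w => [|a t] //; rewrite closed_walk_between => /walk_between_odd ->; rewrite eqxx.
Qed.

Lemma closed_walk_rot1 w : closed_walk A B w -> closed_walk A B (rot 1 w).
Proof.
case: w => [|a t] //; rewrite closed_walk_between rot1_cons -cats1.
rewrite walk_between_cons => /and3P[ok _ wt].
apply: (walk_between_closed (walk_between_cat wt _)).
by rewrite walk_between_cons ok eqxx walk_between_nil eqxx.
Qed.

Lemma alt_prods_cons a t :
  alt_prods A (a :: t) = (lbl A a * (alt_prods A t).2, (alt_prods A t).1).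
Proof.
elim: t a => [|b t IH] a; first by rewrite /= mulr1.
by rewrite [alt_prods A (b :: t)]IH.
Qed.

Lemma alt_prods_cat u v :
  alt_prods A (u ++ v) = mul2 (alt_prods A u)
    (if odd (size u) then ((alt_prods A v).2, (alt_prods A v).1) else alt_prods A v).
Proof.
elim: u => [|a u IH]; first by rewrite /mul2 /= !mul1r; case: (alt_prods A v).
rewrite cat_cons !alt_prods_cons IH /mul2 /=.
by case: (odd (size u)); rewrite /= !mulrA.
Qed.

Lemma alt_prods_cat_even u v : ~~ odd (size u) ->
  alt_prods A (u ++ v) = mul2 (alt_prods A u) (alt_prods A v).
Proof. by move=> /negbTE ev; rewrite alt_prods_cat ev. Qed.

Lemma balanced_cat u v : ~~ odd (size u) ->
  balanced u -> balanced v -> balanced (u ++ v).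
Proof. by move=> ev /eqP bu /eqP bv; rewrite /balanced alt_prods_cat_even // /mul2 /= bu bv. Qed.

Lemma balanced_rot1 w : ~~ odd (size w) -> balanced (rot 1 w) = balanced w.
Proof.
case: w => [|a t] // ev; rewrite rot1_cons -cats1 /balanced alt_prods_cat.
have -> : odd (size t) by move: ev; rewrite /= negbK.
by rewrite [alt_prods A (a :: t)]alt_prods_cons /mul2 /= !mulr1 mulrC eq_sym.
Qed.

Lemma s_walkE w : s_walk A B w = [&& closed_walk A B w, all_A w & balanced w].
Proof. by []. Qed.

Lemma all_A_rot1 w : all_A (rot 1 w) = all_A w.
Proof. by case: w => [|a t] //; rewrite rot1_cons all_rcons. Qed.

End DSRWalks.

Section DSR2.
Variables (R : realFieldType) (n m : nat) (A : 'M[R]_(n, m)) (B : 'M[R]_(m, n)).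
Implicit Types (p q : pair2 n) (st : G2step n m) (c : seq (G2step n m)).
Implicit Types (w : seq (G1step n m)).

Local Notation ok2 := (step_ok (LbarA A) (LunderB B)).
Local Notation ok1 := (step_ok (matA A) (matB B)).
Local Notation walk2 := (walk_between (LbarA A) (LunderB B)).
Local Notation walk1 := (walk_between (matA A) (matB B)).
Local Notation all_A w := (all (fun e => st_A e) w).

Definition pair_of p (x y : 'I_n) : bool := (val p == (x, y)) || (val p == (y, x)).

Lemma pair_of_sym p x y : pair_of p x y = pair_of p y x.
Proof. by rewrite /pair_of orbC. Qed.

Lemma pair_of_other p l :
  (l == (val p).1) || (l == (val p).2) -> pair_of p (other p l) l.
Proof.
case: p => -[i j] ?; rewrite /pair_of /other /=.
by case: eqP => [->|_ /= /eqP ->]; rewrite eqxx ?orbT.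
Qed.

Lemma pair_of_eq p x y x' y' : pair_of p x y -> pair_of p x' y' ->
  (x = x' /\ y = y') \/ (x = y' /\ y = x').
Proof.
case: p => -[i j] ?; rewrite /pair_of /=.
by do 2![case/orP=> /eqP[<- <-]]; auto.
Qed.

Lemma pair_of_swap p x y : pair_of p x y ->
  ~~ ((x == (val p).1) && (y == (val p).2)) -> x = (val p).2 /\ y = (val p).1.
Proof. by case/orP=> /eqP ->; rewrite /= ?eqxx. Qed.

Lemma step_ok2_in_pair st : ok2 st ->
  ((st_r st).2 == (val (st_s st)).1) || ((st_r st).2 == (val (st_s st)).2).
Proof.
case: st => p [k l] isA sr; rewrite /step_ok /merged /LbarA /LunderB /=.
by case: (l == _) => //; case: (l == _) => //; case: isA; rewrite !eqxx.
Qed.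

Lemma proj_step_ok st : ok2 st -> ok1 (proj_step st).
Proof.
case: st => p [k l] isA sr; rewrite /proj_step /step_ok /merged /LbarA /LunderB /other.
rewrite /matA /matB /=; case: (l == _) => //; case: (l == _); last by case: isA; rewrite !eqxx.
by rewrite !oppr_eq0 !sgrN eqr_opp.
Qed.

Lemma lbl_proj_step st : ok2 st -> lbl (matA A) (proj_step st) = lbl (LbarA A) st.
Proof.
move=> /step_ok2_in_pair; case: st => p [k l] isA sr.
rewrite /proj_step /lbl /LbarA /other /matA /=.
by case: (l == _) => //= /eqP ->; rewrite eqxx normrN.
Qed.

Lemma proj_segment s1 s2 p z : walk2 [:: s1; s2] (inl p) z ->
  let l := (st_r s1).2 in
  let x := other (st_s s1) l in
  let y := other (st_s s2) (st_r s2).2 in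
  [/\ z = inl (st_s s2), pair_of p x l, pair_of (st_s s2) y l &
      walk1 [:: proj_step s1; proj_step s2] (inl x) (inl y)].
Proof.
case: s1 s2 => p1 [k1 l1] a1 [] [p2 kl2 a2 []];
  rewrite !walk_between_cons walk_between_nil /= ?andbF //.
move=> /and5P[ok1 /eqP[<-] ok2 /eqP[ekl] /eqP <-]; subst kl2.
split=> //; [exact: pair_of_other (step_ok2_in_pair ok1)|
  exact: pair_of_other (step_ok2_in_pair ok2)|].
by rewrite !walk_between_cons !proj_step_ok // walk_between_nil /vstart /vend /= !eqxx.
Qed.

Lemma alt_prods_proj_segment s1 s2 : ok2 s1 -> ok2 s2 ->
  alt_prods (matA A) [:: proj_step s1; proj_step s2] =
  (lbl (LbarA A) s1, lbl (LbarA A) s2).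
Proof. by move=> ok1 ok2; rewrite /= !mulr1 !lbl_proj_step. Qed.

Lemma proj_aux_size_even c e1 e2 w1 w2 f1 f2 v1 v2 :
  proj_aux c e1 e2 w1 w2 = (f1, f2, v1, v2) ->
  ~~ odd (size w1) -> ~~ odd (size w2) -> ~~ odd (size v1) && ~~ odd (size v2).
Proof.
elim/seq_ind2: c e1 e2 w1 w2 => [|s|s1 s2 c IH] e1 e2 w1 w2;
  [by case=> _ _ <- <- -> -> .. |].
have ev2 w : odd (size (w ++ [:: proj_step s1; proj_step s2])) = odd (size w).
  by rewrite size_cat addn2 /= negbK.
by rewrite /=; case: ifP => _ /IH; rewrite ev2.
Qed.

Lemma proj_aux_all_A c e1 e2 w1 w2 f1 f2 v1 v2 :
  proj_aux c e1 e2 w1 w2 = (f1, f2, v1, v2) -> ~~ odd (size c) ->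
  all_A v1 && all_A v2 = [&& all_A w1, all_A w2 & all_A c].
Proof.
elim/seq_ind2: c e1 e2 w1 w2 => [|s|s1 s2 c IH] e1 e2 w1 w2 //=.
  by case=> _ _ -> ->; rewrite andbT.
rewrite negbK; case: ifP => _ /IH IHc ev; rewrite IHc // all_cat /=;
  by case: (st_A s1); case: (st_A s2); rewrite /= ?andbT ?andbF.
Qed.

Lemma proj_aux_alt_prods c e1 e2 w1 w2 f1 f2 v1 v2 :
  proj_aux c e1 e2 w1 w2 = (f1, f2, v1, v2) ->
  ~~ odd (size c) -> all ok2 c -> ~~ odd (size w1) -> ~~ odd (size w2) ->
  mul2 (alt_prods (matA A) v1) (alt_prods (matA A) v2) =
  mul2 (mul2 (alt_prods (matA A) w1) (alt_prods (matA A) w2)) (alt_prods (LbarA A) c).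
Proof.
elim/seq_ind2: c e1 e2 w1 w2 => [|s|s1 s2 c IH] e1 e2 w1 w2 //=.
  by case=> _ _ <- <- _ _ _ _; rewrite /mul2 /= !mulr1; case: (alt_prods _ _).
rewrite negbK => + ev /and3P[ok1 ok2 okc] ev1 ev2.
have ev_seg w : ~~ odd (size w) -> ~~ odd (size (w ++ [:: proj_step s1; proj_step s2])).
  by rewrite size_cat addn2 /= negbK.
case: ifP => _ /IH ->; rewrite ?ev_seg //;
  rewrite alt_prods_cat_even // alt_prods_proj_segment // /mul2 /=;
  by congr (_, _); ring.
Qed.

Lemma proj_aux_walks c p q e1 e2 w1 w2 a b f1 f2 v1 v2 :
  proj_aux c e1 e2 w1 w2 = (f1, f2, v1, v2) ->
  walk2 c (inl p) (inl q) -> pair_of p e1 e2 ->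
  walk1 w1 (inl a) (inl e1) -> walk1 w2 (inl b) (inl e2) ->
  [&& pair_of q f1 f2, walk1 v1 (inl a) (inl f1) & walk1 v2 (inl b) (inl f2)].
Proof.
elim/seq_ind2: c p e1 e2 w1 w2 => [|s|s1 s2 c IH] p e1 e2 w1 w2.
- by case=> <- <- <- <- /eqP[<-] -> -> ->.
- by move=> _ /walk_between_odd.
move=> /= + /(walk_between_split (u := [:: s1; s2])) [z /proj_segment[-> pxl pyl seg] wc].
set l := (st_r s1).2 in pxl pyl seg *.
move=> + pe w1e w2e; case: ifP => [/eqP e1x|/negbT ne1x] /IH/(_ wc) IHc.
- have e2l : e2 = l.
    by case: (pair_of_eq pe pxl) => -[e1' e2'] //; rewrite e2' -e1x e1'.
  apply: IHc w2e; first by rewrite e2l.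
  by apply: walk_between_cat seg; rewrite -e1x.
- have [e1l e2x] : e1 = l /\ e2 = other (st_s s1) l.
    by case: (pair_of_eq pe pxl) => -[] // e1x; rewrite e1x eqxx in ne1x.
  apply: IHc w1e _; first by rewrite pair_of_sym e1l.
  by apply: walk_between_cat seg; rewrite -e2x.
Qed.

Lemma startS_cases c : startS c = c \/ startS c = rot 1 c.
Proof. by rewrite /startS; case: c => [|st c]; [left|case: ifP; [left|right]]. Qed.

Lemma startS_invariants c : closed_walk (LbarA A) (LunderB B) c ->
  [/\ closed_walk (LbarA A) (LunderB B) (startS c),
      all_A (startS c) = all_A c & balanced (LbarA A) (startS c) = balanced (LbarA A) c].
Proof.
move=> cw; have ev := closed_walk_even cw.
by case: (startS_cases c) => ->; split; rewrite ?closed_walk_rot1 ?all_A_rot1 ?balanced_rot1.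
Qed.

Lemma startS_head c : closed_walk (LbarA A) (LunderB B) c -> (0 < size c)%N ->
  exists st c', startS c = st :: c' /\ st_SR st.
Proof.
case: c => [|a [|b t]] // cw _; first by have := closed_walk_even cw.
rewrite /startS; case: ifP => SRa; first by exists a, (b :: t).
exists b, (rcons t a); split; first by rewrite rot1_cons.
move: cw; rewrite closed_walk_between.
rewrite !walk_between_cons => /and5P[_ _ _ /eqP eba _].
by rewrite -is_S_vstart eba is_S_vend SRa.
Qed.

End DSR2.

Theorem proposition5p4 (R : realFieldType) (n m : nat)
  (A : 'M[R]_(n, m)) (B : 'M[R]_(m, n)) (C : seq (G2step n m)) :
  (2 <= n)%N ->
  is_cycle (LbarA A) (LunderB B) C ->
  (forall W1 W2 : seq (G1step n m), pi_data C = Some (false, W1, W2) ->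
     (s_walk (matA A) (matB B) (W1 ++ W2) <-> s_cycle (LbarA A) (LunderB B) C)) /\
  (forall W1 W2 : seq (G1step n m), pi_data C = Some (true, W1, W2) ->
     s_walk (matA A) (matB B) W1 -> s_walk (matA A) (matB B) W2 ->
     s_cycle (LbarA A) (LunderB B) C).
Proof.
move=> _ cycC; have /and3P[closedC sizeC _] := cycC.
have [closedS allS balS] := startS_invariants closedC.
have [st [c [Ec SRst]]] := startS_head closedC sizeC.
rewrite Ec in closedS allS balS; rewrite /pi_data Ec.
set s := st_s st; have evc := closed_walk_even closedS.
have walkc : walk_between (LbarA A) (LunderB B) (st :: c) (inl s) (inl s).
  by move: closedS; rewrite closed_walk_between /vstart SRst.
have okc : all (step_ok (LbarA A) (LunderB B)) (st :: c) by case/andP: walkc => /andP[].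
have pair_s : pair_of s (val s).1 (val s).2 by rewrite /pair_of -surjective_pairing eqxx.
case E: proj_aux => [[[f1 f2] v1] v2].
have /andP[ev1 _] := proj_aux_size_even E isT isT.
have allE : all (fun e => st_A e) v1 && all (fun e => st_A e) v2 =
    all (fun e => st_A e) (st :: c) := proj_aux_all_A E evc.
have /and3P[pair_f walk1 walk2] := proj_aux_walks E walkc pair_s (eqxx _) (eqxx _).
have balE : balanced (matA A) (v1 ++ v2) = balanced (LbarA A) C.
  rewrite -balS /balanced alt_prods_cat_even //.
  by rewrite (proj_aux_alt_prods E evc okc) // /mul2 /= !mul1r.
split=> W1 W2 [twisted <- <-].
- have [f1E f2E] := pair_of_swap pair_f (negbT twisted).
  rewrite f1E in walk1; rewrite f2E in walk2.
  have closedV := walk_between_closed (walk_between_cat walk1 walk2).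
  by rewrite s_walkE /s_cycle cycC s_walkE closedC closedV all_cat allE allS balE.
- case/and3P=> _ all1 bal1 /and3P[_ all2 bal2].
  by rewrite /s_cycle cycC s_walkE closedC -allS -allE all1 all2 -balE balanced_cat.
Qed.
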